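(* Let $n\geq 2$ and let $\theta$ be a domestic duality of the building $\mathsf{A}_n(2)$ (the projective space $\mathsf{PG}(n,2)$). Then either $\theta$ is an exceptional domestic duality, or $n$ is odd and $\theta$ is a symplectic polarity.
   Context: Vertices of type $i$ of $\mathsf{PG}(n,2)$ are the $(i-1)$-dimensional projective subspaces. A duality is an automorphism with type map $i\mapsto n+1-i$. Simplices are opposite if every chamber containing either is opposite some chamber containing the other. $\theta$ is domestic if no chamber is mapped to an opposite chamber; it is exceptional domestic if it is domestic and for every type $i$ there is a simplex whose type contains $i$ mapped to an opposite simplex. A symplectic polarity is a duality $U\mapsto U^\perp$ for a nondegenerate alternating form on $\mathbb{F}_2^{n+1}$. *)

(* PG(n,2) modelled by the F_2-vector space F_2^(n+1) = 'rV['F_2]_(n.+1);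
   vertices of type i = vector subspaces of dimension i (projective dimension i-1), 1 <= i <= n. *)
From HB Require Import structures.
From mathcomp Require Import all_boot all_order all_algebra all_fingroup all_field.
Set Implicit Arguments. Unset Strict Implicit. Unset Printing Implicit Defensive.
Import GRing.Theory.
Local Open Scope ring_scope.

Definition vT (n : nat) := 'rV['F_2]_(n.+1).

Definition vertex (n : nat) (U : {vspace vT n}) : Prop := (0 < \dim U < n.+1)%N.

Definition incident (n : nat) (U W : {vspace vT n}) : Prop :=
  (U <= W)%VS \/ (W <= U)%VS.

Definition simplex (n : nat) (F : {vspace vT n} -> Prop) : Prop :=
  (forall U, F U -> vertex U) /\ (forall U W, F U -> F W -> incident U W).

Definition has_type (n : nat) (F : {vspace vT n} -> Prop) (i : nat) : Prop :=
  exists U, F U /\ \dim U = i.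

Definition chamber (n : nat) (C : {vspace vT n} -> Prop) : Prop :=
  simplex C /\ forall i, (0 < i <= n)%N -> has_type C i.

Definition face (n : nat) (F G : {vspace vT n} -> Prop) : Prop :=
  forall U, F U -> G U.

Definition chamber_opp (n : nat) (C D : {vspace vT n} -> Prop) : Prop :=
  chamber C /\ chamber D /\
  forall U W, C U -> D W -> (\dim U + \dim W = n.+1)%N -> (U :&: W = 0)%VS.

Definition simplex_opp (n : nat) (F G : {vspace vT n} -> Prop) : Prop :=
  simplex F /\ simplex G /\
  (forall C, chamber C -> face F C -> exists D, chamber D /\ face G D /\ chamber_opp C D) /\
  (forall D, chamber D -> face G D -> exists C, chamber C /\ face F C /\ chamber_opp C D).

Definition img (n : nat) (theta : {vspace vT n} -> {vspace vT n})
  (F : {vspace vT n} -> Prop) : {vspace vT n} -> Prop :=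
  fun W => exists U, F U /\ W = theta U.

Definition duality (n : nat) (theta : {vspace vT n} -> {vspace vT n}) : Prop :=
  (forall U, vertex U -> vertex (theta U) /\ \dim (theta U) = (n.+1 - \dim U)%N) /\
  (forall U W, vertex U -> vertex W -> theta U = theta W -> U = W) /\
  (forall W, vertex W -> exists U, vertex U /\ theta U = W) /\
  (forall U W, vertex U -> vertex W -> (incident U W <-> incident (theta U) (theta W))).

Definition domestic (n : nat) (theta : {vspace vT n} -> {vspace vT n}) : Prop :=
  forall C, chamber C -> ~ chamber_opp C (img theta C).

Definition exceptional_domestic (n : nat) (theta : {vspace vT n} -> {vspace vT n}) : Prop :=
  domestic theta /\
  forall i, (0 < i <= n)%N ->
    exists F, simplex F /\ has_type F i /\ simplex_opp F (img theta F).

Definition bform (n : nat) (M : 'M['F_2]_(n.+1)) (x y : vT n) : 'F_2 :=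
  (x *m M *m y^T) 0 0.

Definition symplectic_polarity (n : nat) (theta : {vspace vT n} -> {vspace vT n}) : Prop :=
  exists M : 'M['F_2]_(n.+1),
    (forall x : vT n, bform M x x = 0) /\
    (forall x : vT n, (forall y : vT n, bform M x y = 0) -> x = 0) /\
    (forall U, vertex U -> forall y : vT n,
        y \in theta U <-> (forall x : vT n, x \in U -> bform M x y = 0)).

(** Over F_2 a duality [theta] of PG(n,2) comes from a bilinear form: [B x y = 1]
    iff [y] lies off the hyperplane [theta <[x]>].  Additivity in [y] holds because a
    hyperplane has index 2; additivity in [x] because the three points of a line go to
    the three hyperplanes through a codimension-2 subspace, and the indicators of these
    sum to zero.  Then [theta U] is the right orthogonal of [U] for every vertex [U].

    If [B] is alternating, [theta] is a symplectic polarity, and [n + 1] is even since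
    a skew-symmetric integer lift of the Gram matrix has zero determinant in odd size.
    Otherwise, for each [1 <= i <= n] there is an [i]-space [U] on which [B] is
    nondegenerate: adjoin anisotropic vectors one at a time, keeping an anisotropic
    vector orthogonal to the current space, which can be renewed as long as that
    orthogonal has dimension at least 4 (for [i = n] take [U] with
    [theta U = <[x]>], [x] anisotropic).  Such a [U] is complementary to [theta U], and
    complementary vertices are opposite, since every flag through one of them extends
    to an opposite flag through the other.  Domesticity itself is only carried into the
    conclusion. *)

From mathcomp Require Import all_boot all_order all_algebra all_fingroup all_field.
From Stdlib Require Import Classical ClassicalEpsilon.
From Stdlib Require Import FunctionalExtensionality PropExtensionality.
From mathcomp Require Import zify ring.
Set Implicit Arguments. Unset Strict Implicit. Unset Printing Implicit Defensive.
Import GRing.Theory.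
Local Open Scope ring_scope.

Lemma F2_cases (c : 'F_2) : c = 0 \/ c = 1.
Proof. by case: c => [[|[|]] //] ?; [left | right]; apply/val_inj. Qed.

Lemma F2_addrr (c : 'F_2) : c + c = 0.
Proof. exact: (addrr_pchar2 (pchar_Fp _)). Qed.

Lemma F2_nat_intr (c : 'F_2) : ((c : nat)%:Z)%:~R = c.
Proof. by rewrite /intmul /= natr_Zp. Qed.

Lemma addvv_F2 (V : lmodType 'F_2) (x : V) : x + x = 0.
Proof. by rewrite -mulr2n -scaler_nat pchar_Fp_0 ?scale0r. Qed.

Section Subspaces.

Variables (K : fieldType) (vT : vectType K).
Implicit Types (U V W : {vspace vT}) (v : vT).

Lemma ltn_dimvS U V v : (U <= V)%VS -> v \in V -> v \notin U -> (\dim U < \dim V)%N.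
Proof.
move=> sUV vV vU; rewrite ltn_neqAle dimvS // andbT.
by rewrite (dimv_leqif_sup sUV); apply: contra vU => /subvP->.
Qed.

Lemma subv_eqdim U V : (U <= V)%VS -> (\dim V <= \dim U)%N -> U = V.
Proof. by move=> sUV leVU; apply/eqP; rewrite eqEdim sUV. Qed.

Lemma dimv_ltn_notin U V : (\dim V < \dim U)%N -> exists2 u, u \in U & u \notin V.
Proof. by move=> ltVU; apply/subvPn; apply: contraTN ltVU => /dimvS; rewrite -leqNgt. Qed.

Lemma dimv_addv_line U v : v \notin U -> \dim (U + <[v]>) = (\dim U).+1.
Proof.
move=> vU; have vUv : v \in (U + <[v]>)%VS by rewrite (subvP (addvSr U _)) ?memv_line.
apply/eqP; rewrite eqn_leq (ltn_dimvS (addvSl U _) vUv vU) andbT -addn1.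
by rewrite (leq_trans (dimv_add_leqif _ _)) // dim_vline leq_add2l leq_b1.
Qed.

Lemma leq_dimv_cap U V : (\dim U + \dim V <= \dim (U :&: V) + \dim {:vT})%N.
Proof. by rewrite -dimv_sum_cap addnC leq_add2l dimvS ?subvf. Qed.

Lemma capv_eq0P U V : (U :&: V = 0)%VS <-> (forall z, z \in U -> z \in V -> z = 0).
Proof.
split=> [UV0 z zU zV | UV0]; first by apply/eqP; rewrite -memv0 -UV0 memv_cap zU.
by apply/eqP; rewrite -subv0; apply/subvP => z /memv_capP[zU zV]; rewrite memv0 (UV0 z).
Qed.

Lemma dimv_cap_compl_sup U V V' :
  (U :&: V = 0)%VS -> (V <= V')%VS -> (\dim U + \dim V)%N = \dim {:vT} ->
  (\dim (U :&: V') + \dim V)%N = \dim V'.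
Proof.
move=> UV0 sVV' dUV; have := dimv_sum_cap U V'.
have -> : (U + V' = fullv)%VS.
  apply: subv_eqdim; rewrite ?subvf // -dUV -(dimv_disjoint_sum UV0).
  by rewrite dimvS // addvS.
rewrite -dUV; lia.
Qed.

Lemma capv_addv_line_eq0 U V V' v :
  (U :&: V = 0)%VS -> (V' <= V)%VS -> v \in V -> v \notin V' ->
  ((U + <[v]>) :&: V' = 0)%VS.
Proof.
move=> /capv_eq0P UV0 sV'V vV vV'.
apply/capv_eq0P => _ /memv_addP[u uU [_ /vlineP[c ->] ->]] zV'.
have u0 : u = 0.
  apply: UV0 => //; rewrite -[u](addrK (c *: v)) memvB ?memvZ //.
  exact: (subvP sV'V).
move: zV'; rewrite u0 add0r; have [-> | c0] := eqVneq c 0; first by rewrite scale0r.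
by move=> /(memvZ c^-1); rewrite scalerK // (negbTE vV').
Qed.

End Subspaces.

Section HyperplanesF2.

Variable vT : vectType 'F_2.
Implicit Types (H : {vspace vT}) (x y z : vT).

Lemma memv_line_F2 x y : x != 0 -> x \in <[y]>%VS -> x = y.
Proof.
move=> x0 /vlineP[c xE]; move: x0; rewrite xE.
by case: (F2_cases c) => ->; rewrite ?scale0r ?eqxx ?scale1r.
Qed.

Lemma memvD_notin H y z :
  (\dim H).+1 = \dim {:vT} -> y \notin H -> z \notin H -> y + z \in H.
Proof.
move=> hypH yH zH; have : z \in (H + <[y]>)%VS.
  by rewrite (subv_eqdim (subvf (H + <[y]>))) ?memvf // dimv_addv_line // hypH.
move: zH => /[swap] /memv_addP[h hH [_ /vlineP[c ->] ->]].
case: (F2_cases c) => ->; first by rewrite scale0r addr0 hH.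
by rewrite scale1r addrCA addvv_F2 addr0.
Qed.

Definition hind H y : 'F_2 := (y \notin H)%:R.

Lemma hindD H : (\dim H).+1 = \dim {:vT} -> {morph hind H : y z / y + z}.
Proof.
move=> hypH y z; rewrite /hind.
have [yH | yH] := boolP (y \in H); first by rewrite rpredDl //= add0r.
have [zH | zH] := boolP (z \in H); first by rewrite rpredDr // yH /= addr0.
by rewrite memvD_notin //= F2_addrr.
Qed.

(* The hypotheses say that H1, H2, H3 are the three hyperplanes of a pencil. *)
Lemma hind_three_hyperplanes H1 H2 H3 :
  (\dim H2).+1 = \dim {:vT} -> (\dim H3).+1 = \dim {:vT} -> ~~ (H1 <= H2)%VS ->
  (H1 :&: H2 <= H3)%VS -> (H1 :&: H3 <= H2)%VS -> (H2 :&: H3 <= H1)%VS ->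
  forall y, hind H3 y = hind H1 y + hind H2 y.
Proof.
move=> hypH2 hypH3 /subvPn[w wH1 wH2] s12 s13 s23 y.
have memvI (A B C : {vspace vT}) x : (A :&: B <= C)%VS -> x \in A -> x \in B -> x \in C.
  by move=> sABC xA xB; rewrite (subvP sABC) ?memv_cap ?xA.
rewrite /hind; have [yH1 | yH1] := boolP (y \in H1); have [yH2 | yH2] := boolP (y \in H2) => /=.
- by rewrite (memvI _ _ _ _ s12) // addr0.
- rewrite add0r; have [yH3 | //] := boolP (y \in H3).
  by rewrite (memvI _ _ _ _ s13 yH1 yH3) in yH2.
- rewrite addr0; have [yH3 | //] := boolP (y \in H3).
  by rewrite (memvI _ _ _ _ s23 yH2 yH3) in yH1.
have wH3 : w \notin H3 by apply: contra wH2 => /(memvI _ _ _ _ s13 wH1).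
have [yH3 | yH3] := boolP (y \in H3); first by rewrite /= F2_addrr.
have ywH1 := memvI _ _ _ _ s23 (memvD_notin hypH2 yH2 wH2) (memvD_notin hypH3 yH3 wH3).
by rewrite rpredDr // (negbTE yH1) in ywH1.
Qed.

End HyperplanesF2.

Section BilinearForms.

Variable n : nat.
Implicit Types (M : 'M['F_2]_(n.+1)) (x y z : vT n).

Lemma bformDl M x y z : bform M (x + y) z = bform M x z + bform M y z.
Proof. by rewrite /bform !mulmxDl mxE. Qed.

Lemma bformDr M x y z : bform M x (y + z) = bform M x y + bform M x z.
Proof. by rewrite /bform linearD /= mulmxDr mxE. Qed.

Lemma bformZl M c x z : bform M (c *: x) z = c * bform M x z.
Proof. by rewrite /bform -!scalemxAl mxE. Qed.

Lemma bformZr M c x z : bform M x (c *: z) = c * bform M x z.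
Proof. by rewrite /bform linearZ /= -scalemxAr mxE. Qed.

Lemma bform0l M z : bform M 0 z = 0.
Proof. by rewrite -(scale0r 0) bformZl mul0r. Qed.

Lemma bformDD M x y :
  bform M (x + y) (x + y) = bform M x x + bform M y y + bform M x y + bform M y x.
Proof. by rewrite bformDl !bformDr; ring. Qed.

Lemma bform_delta M i j : bform M 'e_i 'e_j = M i j.
Proof. by rewrite /bform trmx_delta -rowE -colE !mxE. Qed.

Lemma bform_biadditive (f : vT n -> vT n -> 'F_2) :
  (forall y, {morph f^~ y : x1 x2 / x1 + x2}) -> (forall x, {morph f x : y1 y2 / y1 + y2}) ->
  forall x y, bform (\matrix_(i, j) f 'e_i 'e_j) x y = f x y.
Proof.
move=> fDl fDr x y.
have f0l y' : f 0 y' = 0 by rewrite -(F2_addrr (f 0 y')) -fDl addr0.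
have f0r x' : f x' 0 = 0 by rewrite -(F2_addrr (f x' 0)) -fDr addr0.
have fZl c x' y' : f (c *: x') y' = c * f x' y'.
  by case: (F2_cases c) => ->; rewrite ?scale0r ?f0l ?mul0r ?scale1r ?mul1r.
have fZr c x' y' : f x' (c *: y') = c * f x' y'.
  by case: (F2_cases c) => ->; rewrite ?scale0r ?f0r ?mul0r ?scale1r ?mul1r.
rewrite {2}(row_sum_delta x) (big_morph _ (fDl y) (f0l y)).
under eq_bigr => i _ do rewrite fZl {1}(row_sum_delta y) (big_morph _ (fDr _) (f0r _)).
rewrite /bform mxE (eq_bigr (fun j => \sum_i x 0 i * f 'e_i 'e_j * y 0 j)); last first.
  by move=> j _; rewrite !mxE big_distrl; apply: eq_bigr => i _; rewrite !mxE.
rewrite exchange_big; apply: eq_bigr => i _; rewrite big_distrr.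
by apply: eq_bigr => j _; rewrite fZr /=; ring.
Qed.

Lemma alternating_mx M : (forall x, bform M x x = 0) ->
  (forall i, M i i = 0) /\ (forall i j, M i j = M j i).
Proof.
move=> Malt; split=> [i | i j]; first by rewrite -bform_delta Malt.
have := Malt ('e_i + 'e_j); rewrite bformDD !bform_delta -!bform_delta !Malt !add0r.
by move/eqP; rewrite addr_eq0 oppr_pchar2 ?pchar_Fp // => /eqP.
Qed.

(* A skew-symmetric integer lift of M has vanishing determinant in odd size. *)
Lemma alternating_nondeg_odd M :
  (forall x, bform M x x = 0) -> (forall x, (forall y, bform M x y = 0) -> x = 0) ->
  odd n.
Proof.
move=> Malt Mnd; apply: contraT => n_even.
have [Mdiag Msym] := alternating_mx Malt.
pose N : 'M[int]_(n.+1) := \matrix_(i, j)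
  if (i < j)%N then (M i j : nat)%:Z else if (j < i)%N then - (M j i : nat)%:Z else 0.
have NT : N^T = - N.
  by apply/matrixP => i j; rewrite !mxE; case: ltngtP => //=; rewrite ?opprK.
have detN : \det N = 0.
  have := det_tr N; rewrite NT -scaleN1r detZ -signr_odd /= (negbTE n_even) expr1 mulN1r.
  move=> detNN; have : \det N *+ 2 == 0 by rewrite mulr2n -{1}detNN addNr.
  by rewrite Num.Theory.mulrn_eq0 /= => /eqP.
have NM : map_mx intr N = M.
  apply/matrixP => i j; rewrite !mxE; case: ltngtP => [_ | _ | /val_inj ->].
  - by rewrite F2_nat_intr.
  - by rewrite mulrNz F2_nat_intr oppr_pchar2 ?pchar_Fp // Msym.
  - by rewrite Mdiag.
have : \det M == 0 by rewrite -NM det_map_mx detN rmorph0.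
case/det0P => v v0 vM; have v_eq0 : v = 0.
  by apply: Mnd => y; rewrite /bform vM mul0mx mxE.
by rewrite v_eq0 eqxx in v0.
Qed.

End BilinearForms.

Section NondegenerateSubspaces.

Variables (n : nat) (M : 'M['F_2]_(n.+1)).
Implicit Types (U W S : {vspace vT n}) (p q x y : vT n).

Local Notation B := (bform M).

Definition rorth U y := forall x, x \in U -> B x y = 0.

Definition lnondeg W := forall x, x \in W -> (forall y, y \in W -> B x y = 0) -> x = 0.

Definition rnondeg U := forall y, y \in U -> rorth U y -> y = 0.

Definition anisotropic_orth_pair W :=
  exists p q, [/\ p \in W, q \in W, B p p = 1, B q q = 1 & B p q = 0].

Lemma anisotropic_neq0 p : B p p = 1 -> p != 0.
Proof. by apply: contraPneq => ->; rewrite bform0l => /eqP; rewrite eq_sym oner_eq0. Qed.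

Lemma rorth_addv_line U p q : rorth U q -> B p q = 0 -> rorth (U + <[p]>) q.
Proof.
move=> Uq pq _ /memv_addP[u uU [_ /vlineP[c ->] ->]].
by rewrite bformDl bformZl Uq // pq mulr0 addr0.
Qed.

Lemma rnondeg_addv_line U q :
  rnondeg U -> rorth U q -> B q q = 1 -> q \notin U /\ rnondeg (U + <[q]>).
Proof.
move=> Und Uq qq; split.
  by apply: contraL (anisotropic_neq0 qq) => qU; rewrite (Und q qU Uq) eqxx.
move=> _ /memv_addP[u uU [_ /vlineP[c ->] ->]] orth_uq.
have Uu : rorth U u.
  move=> x xU; have := orth_uq x (subvP (addvSl _ _) x xU).
  by rewrite bformDr bformZr Uq // mulr0 addr0.
have u0 := Und u uU Uu; move: orth_uq; rewrite u0 add0r => /(_ q).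
by rewrite bformZr qq mulr1 => -> //; rewrite ?scale0r // (subvP (addvSr U _)) ?memv_line.
Qed.

Lemma no_anisotropic_orth_pair_orth W p x y :
  ~ anisotropic_orth_pair W -> p \in W -> B p p = 1 ->
  x \in W -> B p x = 0 -> B x p = 0 -> y \in W -> B p y = 0 -> B y p = 0 ->
  B x y = 0.
Proof.
move=> no_pair pW pp xW px xp yW py yp.
have isotropic z : z \in W -> B p z = 0 -> B z z = 0.
  move=> zW pz; case: (F2_cases (B z z)) => // zz.
  by case: no_pair; exists p, z.
case: (F2_cases (B x y)) => // xy; case: no_pair; exists (p + x), (p + y).
rewrite !memvD // !bformDD pp px xp py yp (isotropic x) // (isotropic y) // !addr0.
by rewrite bformDl !bformDr pp py xp xy addr0 add0r F2_addrr.
Qed.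

Lemma lorth_hyperplane_line W S x1 x2 :
  lnondeg W -> (S <= W)%VS -> (\dim W <= (\dim S).+1)%N ->
  x1 \in W -> x2 \in W ->
  (forall s, s \in S -> B x1 s = 0) -> (forall s, s \in S -> B x2 s = 0) ->
  x1 != 0 -> x2 \in <[x1]>%VS.
Proof.
move=> Wnd sSW dimW x1W x2W x1S x2S x10.
have [z zW x1z] : exists2 z, z \in W & B x1 z = 1.
  apply: NNPP => no_z; move/eqP: x10; apply; apply: Wnd => // y yW.
  by case: (F2_cases (B x1 y)) => // x1y; case: no_z; exists y.
have zS : z \notin S by apply/negP => /x1S; rewrite x1z => /eqP; rewrite oner_eq0.
have W_eq : (S + <[z]>)%VS = W.
  apply: subv_eqdim; last by rewrite dimv_addv_line.
  by rewrite subv_add sSW -memvE.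
have orthW x : (forall s, s \in S -> B x s = 0) -> B x z = 0 -> x \in W -> x = 0.
  move=> xS xz xW; apply: Wnd => // y; rewrite -W_eq => /memv_addP[s sS [_ /vlineP[c ->] ->]].
  by rewrite bformDr bformZr xS // xz mulr0 addr0.
case: (F2_cases (B x2 z)) => x2z; first by rewrite (orthW x2) ?mem0v.
have x12 : x1 + x2 = 0.
  apply: orthW; rewrite ?memvD // ?bformDl ?x1z ?x2z ?F2_addrr // => s sS.
  by rewrite bformDl x1S // x2S // addr0.
by rewrite -[x2]add0r -x12 -addrA addvv_F2 addr0 memv_line.
Qed.

Lemma exists_anisotropic_orth_pair W K p :
  lnondeg W -> p \in W -> B p p = 1 -> (K <= W)%VS ->
  (forall x, x \in K -> B p x = 0 /\ B x p = 0) -> (4 <= \dim W <= (\dim K).+2)%N ->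
  anisotropic_orth_pair W.
Proof.
move=> Wnd pW pp sKW Kp /andP[dimW4 dimWK]; apply: NNPP => no_pair.
have KW x : x \in K -> x \in W by apply: subvP.
have orthK x s : x \in K -> s \in (K + <[p]>)%VS -> B x s = 0.
  move=> xK /memv_addP[k kK [_ /vlineP[c ->] ->]].
  have [px xp] := Kp x xK; have [pk kp] := Kp k kK.
  rewrite bformDr bformZr xp mulr0 addr0.
  exact: (no_anisotropic_orth_pair_orth no_pair pW pp (KW _ xK) px xp (KW _ kK) pk kp).
have pK : p \notin K by apply/negP => /Kp[]; rewrite pp => /eqP; rewrite oner_eq0.
have [x1 x1K x10] : exists2 x1, x1 \in K & x1 \notin (0 : {vspace vT n})%VS.
  by apply: dimv_ltn_notin; rewrite dimv0; lia.
rewrite memv0 in x10.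
have [x2 x2K x2x1] : exists2 x2, x2 \in K & x2 \notin <[x1]>%VS.
  by apply: dimv_ltn_notin; rewrite dim_vline x10; lia.
have sSW : (K + <[p]> <= W)%VS by rewrite subv_add sKW -memvE.
have dimS : (\dim W <= (\dim (K + <[p]>)).+1)%N by rewrite dimv_addv_line.
move/negP: x2x1; apply.
by apply: (lorth_hyperplane_line Wnd sSW dimS (KW _ x1K) (KW _ x2K)) => // s; apply: orthK.
Qed.

End NondegenerateSubspaces.

Section OppositeChambers.

Variable n : nat.
Implicit Types (U W X Y : {vspace vT n}) (c d : nat -> {vspace vT n}).
Implicit Types (C D : {vspace vT n} -> Prop).

Lemma dimvT : \dim {:vT n} = n.+1.
Proof. by rewrite dimvf /dim /= mul1n. Qed.

Lemma incident_subv X Y : incident X Y -> (\dim X <= \dim Y)%N -> (X <= Y)%VS.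
Proof. by case=> // sYX dimXY; rewrite (subv_eqdim sYX dimXY). Qed.

Definition full_flag c :=
  (forall j, (j <= n.+1)%N -> \dim (c j) = j) /\
  (forall j k, (j <= k <= n.+1)%N -> (c j <= c k)%VS).

Definition flag_chamber c X := exists2 l, (0 < l < n.+1)%N & X = c l.

Lemma flag_chamberP c : full_flag c -> chamber (flag_chamber c).
Proof.
case=> dim_c mono_c; split; last first.
  by move=> i /andP[i0 iN]; exists (c i); split; [exists i; [lia | done] | rewrite dim_c; lia].
split=> [_ [l l_in ->] | _ _ [l l_in ->] [k k_in ->]]; first by rewrite /vertex dim_c //; lia.
by case: (leqP l k) => lk; [left | right]; apply: mono_c; lia.
Qed.

Lemma chamber_flag C : chamber C -> exists2 c, full_flag c & C = flag_chamber c.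
Proof.
case=> [[C_vertex C_inc] C_type].
have exX j : exists X, ((j <= n.+1)%N -> \dim X = j) /\ ((0 < j < n.+1)%N -> C X).
  have [j_in | j_out] := boolP (0 < j < n.+1)%N.
    by have [X [CX dimX]] := C_type j j_in; exists X.
  have [j0 | j_pos] := posnP j; first by exists 0%VS; rewrite dimv0 j0.
  by exists fullv; split=> [jN | ]; [rewrite dimvT; lia | lia].
pose c j := proj1_sig (constructive_indefinite_description _ (exX j)).
have [dim_c C_c] : (forall j, (j <= n.+1)%N -> \dim (c j) = j) /\
                   (forall j, (0 < j < n.+1)%N -> C (c j)).
  by split=> j; case: (proj2_sig (constructive_indefinite_description _ (exX j))).
have C_eq X Y : C X -> C Y -> \dim X = \dim Y -> X = Y.
  move=> CX CY dimXY; apply: subv_eqdim; rewrite ?dimXY //.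
  by apply: incident_subv; [exact: C_inc | rewrite dimXY].
have flag_c : full_flag c.
  split=> // j k /andP[jk kN].
  have [j0 | j_pos] := posnP j.
    by move: (dim_c j); rewrite j0 => /(_ isT)/eqP; rewrite dimv_eq0 => /eqP ->; apply: sub0v.
  have [kN1 | k_lt] := eqVneq k n.+1.
    by rewrite (subv_eqdim (subvf (c k))) ?subvf // dimvT dim_c // kN1.
  by apply: incident_subv; [apply: C_inc; apply: C_c | rewrite !dim_c]; lia.
exists c => //; apply: functional_extensionality => X; apply: propositional_extensionality.
split=> [CX | [l l_in ->]]; last exact: C_c.
have dimX : (0 < \dim X < n.+1)%N := C_vertex X CX.
by exists (\dim X) => //; apply: C_eq => //; [apply: C_c | rewrite dim_c]; lia.
Qed.

Lemma flag_chamber_opp c d :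
  full_flag c -> full_flag d -> (forall l, (l <= n.+1)%N -> (d l :&: c (n.+1 - l)%N = 0)%VS) ->
  chamber_opp (flag_chamber c) (flag_chamber d).
Proof.
move=> flag_c flag_d cd; split; [exact: flag_chamberP | split; [exact: flag_chamberP | ]].
move=> _ _ [k k_in ->] [l l_in ->]; rewrite (proj1 flag_c) ?(proj1 flag_d); try lia.
by move=> kl; rewrite capvC -(cd l) //; [congr (_ :&: c _)%VS | ]; lia.
Qed.

Lemma chamber_opp_sym C D : chamber_opp C D -> chamber_opp D C.
Proof.
case=> C_ch [D_ch CD]; split=> //; split=> // X Y DX CY dimXY.
by rewrite capvC CD // addnC.
Qed.

Definition opposite_flag_step c i W j w :=
  [&& w \in c (n.+1 - j)%N, w \notin c (n - j)%N & (j < n.+1 - i)%N ==> (w \in W)].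

Lemma exists_opposite_flag_step c i W j :
  full_flag c -> (\dim W + i = n.+1)%N -> (c i :&: W = 0)%VS -> (j < n.+1)%N ->
  exists w, opposite_flag_step c i W j w.
Proof.
case=> dim_c mono_c dimWi ciW0 jN.
have dim_Wc l : (i <= l <= n.+1)%N -> (\dim (W :&: c l) + i)%N = l.
  move=> /andP[il lN]; have WciO : (W :&: c i = 0)%VS by rewrite capvC.
  have sci : (c i <= c l)%VS by apply: mono_c; rewrite il.
  have dimWci : (\dim W + \dim (c i))%N = \dim {:vT n} by rewrite dim_c ?dimvT; lia.
  by have := dimv_cap_compl_sup WciO sci dimWci; rewrite !dim_c //; lia.
have [jW | jW] := ltnP j (n.+1 - i).
  have [w] : exists2 w, w \in (W :&: c (n.+1 - j)%N)%VS & w \notin (W :&: c (n - j)%N)%VS.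
    by apply: dimv_ltn_notin; rewrite -(ltn_add2r i) !dim_Wc //; lia.
  rewrite !memv_cap => /andP[wW wc]; rewrite wW => wc'.
  by exists w; rewrite /opposite_flag_step wc wc' wW implybT.
have [w wc wc'] : exists2 w, w \in c (n.+1 - j)%N & w \notin c (n - j)%N.
  by apply: dimv_ltn_notin; rewrite !dim_c //; lia.
by exists w; rewrite /opposite_flag_step wc wc' ltnNge jW.
Qed.

Lemma exists_opposite_flag c i W :
  full_flag c -> (\dim W + i = n.+1)%N -> (c i :&: W = 0)%VS ->
  exists2 d, full_flag d &
    (forall l, (l <= n.+1)%N -> (d l :&: c (n.+1 - l)%N = 0)%VS) /\ d (n.+1 - i)%N = W.
Proof.
move=> flag_c dimWi ciW0; have [_ mono_c] := flag_c.
pose w j := odflt 0 [pick w | opposite_flag_step c i W j w].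
have Pw j : (j < n.+1)%N -> opposite_flag_step c i W j (w j).
  move=> /(exists_opposite_flag_step flag_c dimWi ciW0)[v Pv].
  by rewrite /w; case: pickP => [// | /(_ v)]; rewrite Pv.
pose d l := (\sum_(j < l) <[w j]>)%VS.
have d_opp l : (l <= n.+1)%N -> \dim (d l) = l /\ (d l :&: c (n.+1 - l)%N = 0)%VS.
  elim: l => [_ | l IHl lN]; first by rewrite /d big_ord0 dimv0 cap0v.
  have [dim_dl dl_c] := IHl (ltnW lN); case/and3P: (Pw l lN) => wc wc' _.
  have wdl : w l \notin d l.
    by apply: contra wc' => wdl; rewrite ((capv_eq0P _ _).1 dl_c _ wdl wc) mem0v.
  rewrite /d big_ord_recr -/(d l) dimv_addv_line // dim_dl subSS; split=> //.
  by apply: capv_addv_line_eq0 dl_c _ wc wc'; apply: mono_c; lia.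
exists d; first split=> [l /d_opp[] // | j k /andP[jk _]].
  by apply/subv_sumP => j' _; apply: (sumv_sup (widen_ord jk j')).
split=> [l /d_opp[] // | ]; apply: subv_eqdim; last by rewrite (d_opp _ (leq_subr _ _)).1; lia.
apply/subv_sumP => j _; rewrite -memvE.
by case/and3P: (Pw j (leq_trans (ltn_ord j) (leq_subr _ _))) => _ _ /implyP; apply.
Qed.

Lemma exists_chamber_opp_compl U W C :
  (\dim U + \dim W = n.+1)%N -> (U :&: W = 0)%VS -> chamber C -> C U ->
  exists D, [/\ chamber D, D W & chamber_opp C D].
Proof.
move=> dimUW UW0 C_ch CU; have [c flag_c C_eq] := chamber_flag C_ch.
have [i i_in Uc] : flag_chamber c U by rewrite -C_eq.
have dimU : \dim U = i by rewrite Uc (proj1 flag_c) //; lia.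
have ciW0 : (c i :&: W = 0)%VS by rewrite -Uc.
have dimWi : (\dim W + i = n.+1)%N by lia.
have [d flag_d [cd dW]] := exists_opposite_flag flag_c dimWi ciW0.
exists (flag_chamber d); split; first exact: flag_chamberP.
  by exists (n.+1 - i)%N; [lia | rewrite dW].
by rewrite C_eq; apply: flag_chamber_opp.
Qed.

Lemma simplex1 U : vertex U -> simplex (fun X => X = U).
Proof. by move=> vU; split=> [_ -> // | _ _ -> ->]; left. Qed.

Lemma simplex_opp_compl U W :
  vertex U -> (\dim U + \dim W = n.+1)%N -> (U :&: W = 0)%VS ->
  simplex_opp (fun X => X = U) (fun X => X = W).
Proof.
move=> vU dimUW UW0; have vW : vertex W by move: vU; rewrite /vertex; lia.
split; first exact: simplex1; split; first exact: simplex1.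
split=> [C C_ch CU | D D_ch DW].
  have [D [D_ch DW CD]] := exists_chamber_opp_compl dimUW UW0 C_ch (CU U erefl).
  by exists D; split=> //; split=> // _ ->.
have dimWU : (\dim W + \dim U = n.+1)%N by rewrite addnC.
have WU0 : (W :&: U = 0)%VS by rewrite capvC.
have [C [C_ch CU DC]] := exists_chamber_opp_compl dimWU WU0 D_ch (DW W erefl).
by exists C; split=> //; split=> [_ -> // | ]; apply: chamber_opp_sym.
Qed.

End OppositeChambers.

Section DualityForm.

Variables (n : nat) (theta : {vspace vT n} -> {vspace vT n}).
Hypothesis theta_dual : duality theta.
Implicit Types (U W X Y : {vspace vT n}) (x y : vT n).

Lemma dual_dim U : vertex U -> \dim (theta U) = (n.+1 - \dim U)%N.
Proof. by case: theta_dual => dual_dim_type _ /dual_dim_type[]. Qed.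

Lemma dual_surj W : vertex W -> exists2 U, vertex U & theta U = W.
Proof. by case: theta_dual => _ [_ [dual_surj _]] /dual_surj[U []]; exists U. Qed.

Lemma dual_subvE U W : vertex U -> vertex W -> (theta W <= theta U)%VS = (U <= W)%VS.
Proof.
move=> vU vW; case: theta_dual => _ [_ [_ dual_inc]].
have := dual_dim vU; have := dual_dim vW; move: vU vW; rewrite /vertex => vU vW dimW dimU.
apply/idP/idP => sUW.
  apply: incident_subv; first by apply/(dual_inc _ _ vU vW); right.
  by have := dimvS sUW; rewrite dimW dimU; lia.
apply: incident_subv; first by case: ((dual_inc _ _ vU vW).1 (or_introl sUW)); [right | left].
by rewrite dimW dimU; have := dimvS sUW; lia.
Qed.

Section Points.

Hypothesis n_gt1 : (1 < n)%N.

Lemma vertex_line x : x != 0 -> vertex <[x]>%VS.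
Proof. by rewrite /vertex dim_vline => ->; lia. Qed.

Lemma dim_dual_line x : x != 0 -> \dim (theta <[x]>) = n.
Proof. by move=> x0; rewrite dual_dim ?dim_vline ?x0 ?subn1 //; apply: vertex_line. Qed.

Lemma dual_line_hyperplane x : x != 0 -> (\dim (theta <[x]>)).+1 = \dim {:vT n}.
Proof. by move=> x0; rewrite dim_dual_line // dimvT. Qed.

Lemma exists_dual_preimage_line x : x != 0 ->
  exists X, [/\ vertex X, \dim X = n & theta X = <[x]>%VS].
Proof.
move=> x0; have [X vX thX] := dual_surj (vertex_line x0); exists X; split=> //.
by have := dual_dim vX; rewrite thX dim_vline x0; move: vX; rewrite /vertex; lia.
Qed.

Lemma dual_subv_line W a : vertex W -> a != 0 -> (theta W <= theta <[a]>)%VS = (a \in W).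
Proof. by move=> vW a0; rewrite dual_subvE //; apply: vertex_line. Qed.

Lemma dual_lines_subv x y : x != 0 -> y != 0 -> (theta <[x]> <= theta <[y]>)%VS = (x == y).
Proof.
move=> x0 y0; rewrite dual_subv_line //; last exact: vertex_line.
by apply/idP/eqP => [/(memv_line_F2 y0) -> | ->]; rewrite ?memv_line.
Qed.

(* Two distinct dual hyperplanes meet in the dual of the line they span. *)
Lemma dual_lines_cap x y z : x != 0 -> y != 0 -> x != y -> z != 0 ->
  z \in (<[x]> + <[y]>)%VS -> (theta <[x]> :&: theta <[y]> <= theta <[z]>)%VS.
Proof.
move=> x0 y0 xy z0 zL; set L := (<[x]> + <[y]>)%VS.
have yx : y \notin <[x]>%VS by apply: contra xy => /(memv_line_F2 y0) ->.
have dimL : \dim L = 2 by rewrite dimv_addv_line // dim_vline x0.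
have vL : vertex L by rewrite /vertex dimL; lia.
have thL a : a != 0 -> a \in L -> (theta L <= theta <[a]>)%VS.
  by move=> a0 aL; rewrite dual_subv_line.
have nsub : ~~ (theta <[y]> <= theta <[x]>)%VS.
  by rewrite dual_lines_subv // eq_sym.
have /subvPn[v vy vnx] := nsub.
have dim_sum := ltn_dimvS (addvSl (theta <[x]>) (theta <[y]>)) (subvP (addvSr _ _) v vy) vnx.
have dim_cap : (\dim (theta L) >= \dim (theta <[x]> :&: theta <[y]>))%N.
  have := dimv_sum_cap (theta <[x]>) (theta <[y]>).
  have := dimvS (subvf (theta <[x]> + theta <[y]>)).
  move: dim_sum; rewrite dimvT (dual_dim vL) dimL !dim_dual_line //; lia.
have -> : (theta <[x]> :&: theta <[y]>)%VS = theta L.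
  have Lx : x \in L by rewrite (subvP (addvSl _ _)) ?memv_line.
  have Ly : y \in L by rewrite (subvP (addvSr _ _)) ?memv_line.
  by apply/esym/subv_eqdim => //; rewrite subv_cap !thL.
exact: thL.
Qed.

Definition dform x y : 'F_2 := if x == 0 then 0 else hind (theta <[x]>) y.

Definition dform_mx := \matrix_(i, j) dform 'e_i 'e_j.

Lemma dform_eq0 x y : x != 0 -> (dform x y == 0) = (y \in theta <[x]>%VS).
Proof.
by move=> x0; rewrite /dform (negbTE x0) /hind; case: (_ \in _); rewrite ?eqxx ?oner_eq0.
Qed.

Lemma dformDr x : {morph dform x : y z / y + z}.
Proof.
rewrite /dform; case: eqP => [_ y z | /eqP x0]; first by rewrite addr0.
exact: hindD (dual_line_hyperplane x0).
Qed.

(* The three points of a line are sent to the three hyperplanes through the dual of the line. *)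
Lemma dformDl y : {morph dform^~ y : x1 x2 / x1 + x2}.
Proof.
move=> x1 x2 /=.
have [-> | x10] := eqVneq x1 0; first by rewrite add0r {2}/dform eqxx add0r.
have [-> | x20] := eqVneq x2 0; first by rewrite addr0 {3}/dform eqxx addr0.
have [<- | x12] := eqVneq x1 x2; first by rewrite addvv_F2 F2_addrr /dform eqxx.
have x2E : x2 = x1 + (x1 + x2) by rewrite addrA addvv_F2 add0r.
have x1E : x1 = x2 + (x1 + x2) by rewrite addrCA addvv_F2 addr0.
have x30 : x1 + x2 != 0 by apply: contra x12 => /eqP x3_0; rewrite x2E x3_0 addr0.
have x13 : x1 != x1 + x2 by apply: contra x20 => /eqP x13; rewrite x2E -x13 addvv_F2.
have x23 : x2 != x1 + x2 by apply: contra x10 => /eqP x23; rewrite x1E -x23 addvv_F2.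
have mem_sum a b : a + b \in (<[a]> + <[b]>)%VS by rewrite memv_add ?memv_line.
rewrite /dform (negbTE x10) (negbTE x20) (negbTE x30).
apply: hind_three_hyperplanes; rewrite ?dual_line_hyperplane //.
- by rewrite dual_lines_subv // eq_sym.
- by apply: dual_lines_cap => //; apply: mem_sum.
- by apply: dual_lines_cap => //; rewrite [X in X \in _]x2E mem_sum.
- by apply: dual_lines_cap => //; rewrite [X in X \in _]x1E mem_sum.
Qed.

Lemma bform_dform_mx x y : bform dform_mx x y = dform x y.
Proof. exact: (bform_biadditive (f := dform) dformDl dformDr). Qed.

Lemma dform_mx_nondeg x : (forall y, bform dform_mx x y = 0) -> x = 0.
Proof.
move=> x_orth; apply/eqP; apply: contraT => x0.
have [y _] : exists2 y, y \in fullv & y \notin theta <[x]>%VS.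
  by apply: dimv_ltn_notin; rewrite dimvT dim_dual_line.
by rewrite -dform_eq0 // -bform_dform_mx x_orth eqxx.
Qed.

Lemma mem_dual_rorth U y : vertex U -> y \in theta U -> rorth dform_mx U y.
Proof.
move=> vU yU x xU; rewrite bform_dform_mx.
have [-> | x0] := eqVneq x 0; first by rewrite /dform eqxx.
by apply/eqP; rewrite dform_eq0 // (subvP _ _ yU) // dual_subv_line.
Qed.

Lemma rorth_mem_dual U y : vertex U -> rorth dform_mx U y -> y \in theta U.
Proof.
move=> vU yU; have dim_thU := dual_dim vU.
have orth_line u : u \in U -> u != 0 -> y \in theta <[u]>%VS.
  by move=> uU u0; rewrite -dform_eq0 // -bform_dform_mx yU.
apply: contraT => ythU.
have [x xU x0] : exists2 x, x \in U & x \notin (0 : {vspace vT n})%VS.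
  by apply: dimv_ltn_notin; rewrite dimv0; case/andP: vU.
rewrite memv0 in x0.
have [dimU1 | dimU2] := eqVneq (\dim U) 1%N.
  have Ux : <[x]>%VS = U by apply: subv_eqdim; rewrite -?memvE // dim_vline x0 dimU1.
  by rewrite -Ux orth_line ?memv_line in ythU.
set Y := (theta U + <[y]>)%VS.
have vY : vertex Y by move: vU; rewrite /vertex dimv_addv_line // dim_thU; lia.
have [X vX thX] := dual_surj vY.
have XU : (X <= U)%VS by rewrite -dual_subvE // thX addvSl.
have [u uU uX] : exists2 u, u \in U & u \notin X.
  apply: dimv_ltn_notin; have := dual_dim vX; rewrite thX dimv_addv_line // dim_thU.
  by move: vX vU; rewrite /vertex; lia.
have u0 : u != 0 by apply: contra uX => /eqP ->; rewrite mem0v.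
have : (theta X <= theta <[u]>)%VS.
  by rewrite thX subv_add -memvE orth_line // andbT dual_subv_line.
by rewrite dual_subv_line // (negbTE uX).
Qed.

Lemma mem_dual U y : vertex U -> y \in theta U <-> rorth dform_mx U y.
Proof. by move=> vU; split; [apply: mem_dual_rorth | apply: rorth_mem_dual]. Qed.

Local Notation M := dform_mx.

Lemma exists_rorth_space U : (\dim U <= n)%N ->
  exists W, (forall y, y \in W <-> rorth M U y) /\ \dim W = (n.+1 - \dim U)%N.
Proof.
move=> dimU; have [U0 | U_pos] := posnP (\dim U).
  exists fullv; split=> [y | ]; last by rewrite dimvT U0.
  move: U0 => /eqP; rewrite dimv_eq0 => /eqP ->; rewrite memvf; split=> // _ x.
  by rewrite memv0 => /eqP ->; apply: bform0l.
have vU : vertex U by rewrite /vertex U_pos.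
by exists (theta U); split; [move=> y; apply: mem_dual | apply: dual_dim].
Qed.

Lemma lnondeg_rorth U W : rnondeg M U -> (\dim U < n)%N ->
  (forall y, y \in W <-> rorth M U y) -> \dim W = (n.+1 - \dim U)%N -> lnondeg M W.
Proof.
move=> Und dimU WU dimW x xW x_orth; have [xU | xU] := boolP (x \in U).
  by apply: Und xU _; apply/WU.
have vUx : vertex (U + <[x]>) by rewrite /vertex dimv_addv_line //; lia.
have : (W <= theta (U + <[x]>))%VS.
  by apply/subvP => y yW; apply/mem_dual/rorth_addv_line; [ | apply/WU | apply: x_orth].
by move/dimvS; rewrite dual_dim // dimv_addv_line // dimW; lia.
Qed.

Lemma exists_biorth_subspace W p : p != 0 ->
  exists2 K, (K <= W)%VS & (\dim W <= (\dim K).+2)%N /\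
    (forall x, x \in K -> bform M p x = 0 /\ bform M x p = 0).
Proof.
move=> p0; have vp := vertex_line p0.
have [X [vX dimX thX]] := exists_dual_preimage_line p0.
exists (W :&: theta <[p]> :&: X)%VS; first by rewrite -capvA capvSl.
split=> [ | x]; last first.
  rewrite !memv_cap => /andP[/andP[_ xp] xX].
  have pthX : p \in theta X by rewrite thX memv_line.
  by split; [apply: (mem_dual_rorth vp xp) (memv_line p) | apply: (mem_dual_rorth vX pthX)].
have := leq_dimv_cap W (theta <[p]>); have := leq_dimv_cap (W :&: theta <[p]>) X.
by rewrite dimX dim_dual_line // dimvT; lia.
Qed.

Lemma exists_rnondeg_chain k : (exists x, bform M x x = 1) -> (k <= n - 2)%N ->
  exists U, [/\ \dim U = k, rnondeg M U & exists2 q, rorth M U q & bform M q q = 1].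
Proof.
move=> [x xx]; elim: k => [_ | k IHk k_le].
  exists 0%VS; split; first exact: dimv0.
    by move=> y; rewrite memv0 => /eqP.
  by exists x => // u; rewrite memv0 => /eqP ->; apply: bform0l.
have [U [dimU Und [q Uq qq]]] := IHk (ltnW k_le).
have dimU_lt : (\dim U < n)%N by lia.
have [W [WU dimW]] := exists_rorth_space (ltnW dimU_lt).
have Wnd := lnondeg_rorth Und dimU_lt WU dimW.
have [K sKW [dimK Kp]] := exists_biorth_subspace W (anisotropic_neq0 qq).
have dimWK : (4 <= \dim W <= (\dim K).+2)%N by rewrite dimK dimW dimU; lia.
have [p [q' [pW q'W pp q'q' pq']]] :=
  exists_anisotropic_orth_pair Wnd (proj2 (WU q) Uq) qq sKW Kp dimWK.
have [pU Upnd] := rnondeg_addv_line Und (proj1 (WU p) pW) pp.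
exists (U + <[p]>)%VS; split=> //; first by rewrite dimv_addv_line // dimU.
by exists q' => //; apply: rorth_addv_line => //; apply/WU.
Qed.

Lemma rnondeg_capv_dual U : vertex U -> rnondeg M U -> (U :&: theta U = 0)%VS.
Proof. by move=> vU Und; apply/capv_eq0P => z zU /(mem_dual _ vU); apply: Und. Qed.

Lemma exists_vertex_capv_dual_eq0 i : ~ (forall x, bform M x x = 0) -> (0 < i <= n)%N ->
  exists U, [/\ vertex U, \dim U = i & (U :&: theta U = 0)%VS].
Proof.
move=> M_nalt i_in; have [x xx] : exists x, bform M x x = 1.
  apply: NNPP => no_x; apply: M_nalt => x; case: (F2_cases (bform M x x)) => // xx.
  by case: no_x; exists x.
have x0 := anisotropic_neq0 xx.
have [i_n | i_lt] := eqVneq i n.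
  have [X [vX dimX thX]] := exists_dual_preimage_line x0.
  exists X; split; rewrite ?dimX //.
  rewrite thX; apply/capv_eq0P => z zX /vlineP[c zE]; move: zX; rewrite zE.
  case: (F2_cases c) => ->; rewrite ?scale0r // scale1r => xX.
  have xthX : x \in theta X by rewrite thX memv_line.
  by move: xx; rewrite (mem_dual_rorth vX xthX xX) => /eqP; rewrite eq_sym oner_eq0.
have i_le : (i.-1 <= n - 2)%N by lia.
have [U [dimU Und [q Uq qq]]] := exists_rnondeg_chain (ex_intro _ x xx) i_le.
have [qU Uqnd] := rnondeg_addv_line Und Uq qq.
have vUq : vertex (U + <[q]>) by rewrite /vertex dimv_addv_line // dimU; lia.
exists (U + <[q]>)%VS; split; rewrite ?rnondeg_capv_dual //.
by rewrite dimv_addv_line // dimU; lia.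
Qed.

End Points.

Lemma img_vertex U : img theta (fun X => X = U) = (fun X => X = theta U).
Proof.
apply: functional_extensionality => W; apply: propositional_extensionality.
by split=> [[X [-> ->]] | ->] //; exists U.
Qed.

Lemma exists_simplex_opp_img U : vertex U -> (U :&: theta U = 0)%VS ->
  exists F, simplex F /\ has_type F (\dim U) /\ simplex_opp F (img theta F).
Proof.
move=> vU UthU; exists (fun X => X = U); rewrite img_vertex; split; first exact: simplex1.
split; first by exists U.
by apply: simplex_opp_compl; rewrite // dual_dim //; move: vU; rewrite /vertex; lia.
Qed.

End DualityForm.

Theorem theorem3p10 (n : nat) (theta : {vspace vT n} -> {vspace vT n}) :
  (2 <= n)%N -> duality theta -> domestic theta ->
  exceptional_domestic theta \/ (odd n /\ symplectic_polarity theta).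
Proof.
move=> n_gt1 theta_dual theta_dom; set M := dform_mx theta.
have M_nondeg : forall x, (forall y, bform M x y = 0) -> x = 0 by apply: dform_mx_nondeg.
have [M_alt | M_nalt] := classic (forall x, bform M x x = 0).
  right; split; first exact: alternating_nondeg_odd M_alt M_nondeg.
  by exists M; do 2!split=> //; move=> U vU y; apply: mem_dual.
left; split=> // i i_in.
have [U [vU <- UthU]] := exists_vertex_capv_dual_eq0 theta_dual n_gt1 M_nalt i_in.
exact: exists_simplex_opp_img.
Qed.
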